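(* Let $S$ be a commutative Hausdorff semitopological semigroup. Then $S^{Lmc}$ is not commutative if and only if there exist unbounded sequences $(x_n)$ and $(y_n)$ in $S$ such that $$\mathrm{cl}_{S^{Lmc}}\varepsilon(\{x_ky_n:k<n,\ k,n\in\mathbb{N}\})\cap\mathrm{cl}_{S^{Lmc}}\varepsilon(\{y_kx_n:k<n,\ k,n\in\mathbb{N}\})=\emptyset.$$
   Context: A Hausdorff semitopological semigroup is a semigroup $S$ with a Hausdorff topology such that all maps $\lambda_s(x)=sx$, $r_s(x)=xs$ are continuous. $\mathcal{CB}(S)$: bounded continuous complex functions with sup norm; $\beta S$ its spectrum with Gelfand topology; $L_sf(x)=f(sx)$, $(T_\mu f)(s)=\mu(L_sf)$; $Lmc(S)=\{f\in\mathcal{CB}(S):T_\mu f\in\mathcal{CB}(S)\ \forall \mu\in\beta S\}$. $S^{Lmc}$ is the spectrum of $Lmc(S)$ with the Gelfand topology and multiplication $\mu\nu=\mu\circ T_\nu$, where $(T_\nu f)(s)=\nu(L_sf)$ for $f\in Lmc(S)$; $\varepsilon:S\to S^{Lmc}$ is evaluation, $\varepsilon(s)(f)=f(s)$. $S^*=S^{Lmc}\setminus\varepsilon(S)$. A set $A\subseteq S$ is unbounded if $\mathrm{cl}_{S^{Lmc}}\varepsilon(A)\cap S^*\neq\emptyset$; a sequence $(x_n)$ is unbounded if $\{x_n:n\in\mathbb{N}\}$ is unbounded. *)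

From Stdlib Require Import Reals List.
Open Scope R_scope.

Definition C : Type := (R * R)%type.
Definition Cadd (z w : C) : C := (fst z + fst w, snd z + snd w).
Definition Csub (z w : C) : C := (fst z - fst w, snd z - snd w).
Definition Cmul (z w : C) : C :=
  (fst z * fst w - snd z * snd w, fst z * snd w + snd z * fst w).
Definition Cnorm (z : C) : R := sqrt (fst z * fst z + snd z * snd z).
Definition C0 : C := (0, 0).
Definition C1 : C := (1, 0).

Section Semigroup.
Variables (S : Type) (op : S -> S -> S) (open : (S -> Prop) -> Prop).

Definition is_topology : Prop :=
  open (fun _ => True) /\
  (forall U V, open U -> open V -> open (fun x => U x /\ V x)) /\
  (forall F : (S -> Prop) -> Prop, (forall U, F U -> open U) ->
     open (fun x => exists U, F U /\ U x)).

Definition hausdorff : Prop :=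
  forall x y : S, x <> y -> exists U V, open U /\ open V /\ U x /\ V y /\
    (forall z, ~ (U z /\ V z)).

Definition continuous_SS (g : S -> S) : Prop :=
  forall U, open U -> open (fun x => U (g x)).

Definition hausdorff_semitopological_semigroup : Prop :=
  is_topology /\ hausdorff /\
  (forall a b c, op (op a b) c = op a (op b c)) /\
  (forall s, continuous_SS (fun x => op s x)) /\
  (forall s, continuous_SS (fun x => op x s)).

Definition commutative : Prop := forall a b, op a b = op b a.

Definition continuous_C (f : S -> C) : Prop :=
  forall s eps, 0 < eps -> exists U, open U /\ U s /\
    forall x, U x -> Cnorm (Csub (f x) (f s)) < eps.

Definition bounded_C (f : S -> C) : Prop :=
  exists M, forall x, Cnorm (f x) <= M.

Definition CB (f : S -> C) : Prop := continuous_C f /\ bounded_C f.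

(** Points of the spectrum (Gelfand space) of a function algebra A:
    nonzero multiplicative linear functionals on A.  A functional is a map
    (S -> C) -> C; only its values on A are relevant. *)
Definition is_character (A : (S -> C) -> Prop) (mu : (S -> C) -> C) : Prop :=
  (forall f g, A f -> A g -> mu (fun x => Cadd (f x) (g x)) = Cadd (mu f) (mu g)) /\
  (forall (c : C) f, A f -> mu (fun x => Cmul c (f x)) = Cmul c (mu f)) /\
  (forall f g, A f -> A g -> mu (fun x => Cmul (f x) (g x)) = Cmul (mu f) (mu g)) /\
  (exists f, A f /\ mu f <> C0).

Definition Ls (s : S) (f : S -> C) : S -> C := fun x => f (op s x).
Definition Tmu (mu : (S -> C) -> C) (f : S -> C) : S -> C := fun s => mu (Ls s f).

(** beta S = spectrum of CB(S); Lmc(S) *)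
Definition Lmc (f : S -> C) : Prop :=
  CB f /\ forall mu, is_character CB mu -> CB (Tmu mu f).

Definition SLmc (mu : (S -> C) -> C) : Prop := is_character Lmc mu.

Definition Lmc_eq (mu nu : (S -> C) -> C) : Prop := forall f, Lmc f -> mu f = nu f.

Definition eps_map (s : S) : (S -> C) -> C := fun f => f s.

Definition Lmc_mul (mu nu : (S -> C) -> C) : (S -> C) -> C := fun f => mu (Tmu nu f).

Definition SLmc_commutative : Prop :=
  forall mu nu, SLmc mu -> SLmc nu -> Lmc_eq (Lmc_mul mu nu) (Lmc_mul nu mu).

(** mu lies in the closure, in the Gelfand (weak-star) topology of S^Lmc,
    of epsilon(A) *)
Definition in_cl_eps (A : S -> Prop) (mu : (S -> C) -> C) : Prop :=
  forall (fs : list (S -> C)), Forall Lmc fs -> forall e, 0 < e ->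
    exists a, A a /\ Forall (fun f => Cnorm (Csub (mu f) (eps_map a f)) < e) fs.

Definition in_Sstar (mu : (S -> C) -> C) : Prop :=
  SLmc mu /\ ~ exists s, Lmc_eq mu (eps_map s).

Definition unbounded_set (A : S -> Prop) : Prop :=
  exists mu, in_Sstar mu /\ in_cl_eps A mu.

Definition unbounded_seq (x : nat -> S) : Prop :=
  unbounded_set (fun s => exists n, s = x n).

End Semigroup.

From Stdlib Require Import Reals List Lra Psatz Lia.
From Stdlib Require Import Classical FunctionalExtensionality ClassicalEpsilon.
From mathcomp Require ssreflect ssrbool boolp classical_sets filter.
Open Scope R_scope.

(** If S^Lmc is commutative and mu, nu in S^* are limit
    points of eps(x), eps(y), then the single point mu nu = nu mu lies in both
    closures: mu nu is approached by x_k y_n with k < n (first approach mu by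
    x_k, then nu by y_n with n large, using that nu is not principal), and
    symmetrically nu mu by y_k x_n.

    If mu (T_nu f) = a <> b = nu (T_mu f), a diagonal
    construction, using that eps(S) is dense in S^Lmc, produces sequences
    with f (x_k y_n) ~ a and f (y_k x_n) ~ b for k < n.  Then the two
    closures are separated by f, and the limits of x and y along an
    ultrafilter containing all tails are non-principal, because commutativity
    of S would otherwise force a ~ b. *)

Definition Cconj (z : C) : C := (fst z, - snd z).
Definition Cinv (z : C) : C :=
  (fst z / (fst z * fst z + snd z * snd z), - snd z / (fst z * fst z + snd z * snd z)).

Lemma C_eq (z w : C) : fst z = fst w -> snd z = snd w -> z = w.
Proof. destruct z, w; simpl; intros; subst; reflexivity. Qed.

Lemma Cnorm_ge0 z : 0 <= Cnorm z.
Proof. apply sqrt_pos. Qed.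

Lemma Cnorm_sq z : Cnorm z * Cnorm z = fst z * fst z + snd z * snd z.
Proof. apply sqrt_sqrt; nra. Qed.

Lemma Cnorm_le_sq z r : 0 <= r -> fst z * fst z + snd z * snd z <= r * r -> Cnorm z <= r.
Proof. intros. unfold Cnorm. rewrite <- (sqrt_square r) by lra. apply sqrt_le_1_alt. lra. Qed.

Lemma Cnorm_fst z : Rabs (fst z) <= Cnorm z.
Proof.
  pose proof (Cnorm_sq z); pose proof (Cnorm_ge0 z).
  apply Rsqr_incr_0_var; auto. unfold Rsqr. rewrite <- Rabs_mult, Rabs_right by nra. nra.
Qed.

Lemma Cnorm_snd z : Rabs (snd z) <= Cnorm z.
Proof.
  pose proof (Cnorm_sq z); pose proof (Cnorm_ge0 z).
  apply Rsqr_incr_0_var; auto. unfold Rsqr. rewrite <- Rabs_mult, Rabs_right by nra. nra.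
Qed.

Lemma Cnorm_le_abs z : Cnorm z <= Rabs (fst z) + Rabs (snd z).
Proof.
  pose proof (Rabs_pos (fst z)); pose proof (Rabs_pos (snd z)).
  assert (Rabs (fst z) * Rabs (fst z) = fst z * fst z) by (rewrite <- Rabs_mult; apply Rabs_right; nra).
  assert (Rabs (snd z) * Rabs (snd z) = snd z * snd z) by (rewrite <- Rabs_mult; apply Rabs_right; nra).
  apply Cnorm_le_sq; nra.
Qed.

Lemma Cnorm_mul z w : Cnorm (Cmul z w) = Cnorm z * Cnorm w.
Proof. unfold Cnorm, Cmul; simpl. rewrite <- sqrt_mult by nra. f_equal. ring. Qed.

Lemma Cnorm_add z w : Cnorm (Cadd z w) <= Cnorm z + Cnorm w.
Proof.
  pose proof (Cnorm_sq z); pose proof (Cnorm_sq w);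
  pose proof (Cnorm_ge0 z); pose proof (Cnorm_ge0 w).
  apply Cnorm_le_sq; [lra|].
  destruct z as [a b], w as [c d]; simpl in *.
  assert (CS : a * c + b * d <= Cnorm (a, b) * Cnorm (c, d)).
  { destruct (Rle_dec (a * c + b * d) (Cnorm (a, b) * Cnorm (c, d))) as [|Hgt]; auto.
    assert (E : (Cnorm (a, b) * Cnorm (c, d)) * (Cnorm (a, b) * Cnorm (c, d))
                = (a * c + b * d) * (a * c + b * d) + (a * d - b * c) * (a * d - b * c))
      by (transitivity ((a * a + b * b) * (c * c + d * d)); [rewrite <- H, <- H0|]; ring).
    assert (0 <= Cnorm (a, b) * Cnorm (c, d)) by (apply Rmult_le_pos; auto).
    apply Rnot_le_lt in Hgt. pose proof (Rle_0_sqr (a * d - b * c)). unfold Rsqr in *.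
    assert (Cnorm (a, b) * Cnorm (c, d) * (Cnorm (a, b) * Cnorm (c, d))
            < (a * c + b * d) * (a * c + b * d)) by (apply Rmult_le_0_lt_compat; lra).
    lra. }
  nra.
Qed.

Lemma Cnorm_opp_sub z w : Cnorm (Csub z w) = Cnorm (Csub w z).
Proof. unfold Cnorm, Csub; simpl. f_equal; ring. Qed.

Lemma Cnorm_tri z w u : Cnorm (Csub z u) <= Cnorm (Csub z w) + Cnorm (Csub w u).
Proof.
  replace (Csub z u) with (Cadd (Csub z w) (Csub w u)) by (apply C_eq; simpl; ring).
  apply Cnorm_add.
Qed.

Lemma Cnorm_rev_tri a b : Cnorm a - Cnorm b <= Cnorm (Csub a b).
Proof.
  replace a with (Cadd (Csub a b) b) at 1 by (apply C_eq; simpl; ring).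
  pose proof (Cnorm_add (Csub a b) b). lra.
Qed.

Lemma Cnorm_eq0 z : Cnorm z = 0 -> z = C0.
Proof.
  intro H. pose proof (Cnorm_sq z) as E. rewrite H in E.
  destruct z as [a b]; simpl in *. apply C_eq; simpl; nra.
Qed.

Lemma Cnorm_C0 : Cnorm C0 = 0.
Proof. unfold Cnorm, C0; simpl. replace (0*0+0*0) with 0 by ring. apply sqrt_0. Qed.

Lemma Cnorm_C1 : Cnorm C1 = 1.
Proof. unfold Cnorm, C1; simpl. replace (1*1+0*0) with 1 by ring. apply sqrt_1. Qed.

Lemma Cnorm_pos_neq z : 0 < Cnorm z -> z <> C0.
Proof. intros H E; subst; rewrite Cnorm_C0 in H; lra. Qed.

Lemma Csub_neq_pos z w : z <> w -> 0 < Cnorm (Csub z w).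
Proof.
  intros Hne. destruct (Cnorm_ge0 (Csub z w)) as [|E]; auto.
  exfalso; apply Hne. symmetry in E; apply Cnorm_eq0 in E. unfold Csub, C0 in E. injection E; intros.
  apply C_eq; lra.
Qed.

Lemma Cnorm_small_eq z w : (forall e, 0 < e -> Cnorm (Csub z w) <= e) -> z = w.
Proof.
  intro H. apply NNPP; intros Hne. apply Csub_neq_pos in Hne.
  specialize (H (Cnorm (Csub z w) / 2)). lra.
Qed.

Lemma Cnorm_conj z : Cnorm (Cconj z) = Cnorm z.
Proof. unfold Cnorm, Cconj; simpl; f_equal; ring. Qed.

Lemma Cconj_conj z : Cconj (Cconj z) = z.
Proof. apply C_eq; simpl; ring. Qed.

Lemma Cmul_conj_fst z : fst (Cmul z (Cconj z)) = Cnorm z * Cnorm z.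
Proof. rewrite Cnorm_sq. simpl; ring. Qed.

Lemma Cmul_C1_l z : Cmul C1 z = z.
Proof. apply C_eq; simpl; ring. Qed.

Lemma Cmul_comm a b : Cmul a b = Cmul b a.
Proof. apply C_eq; simpl; ring. Qed.

Lemma Cmul_assoc a b c : Cmul (Cmul a b) c = Cmul a (Cmul b c).
Proof. apply C_eq; simpl; ring. Qed.

Lemma Cmul_C0_l z : Cmul C0 z = C0.
Proof. apply C_eq; simpl; ring. Qed.

Lemma C1_neq_C0 : C1 <> C0.
Proof. intro H; injection H; lra. Qed.

Lemma Cmul_inv z : z <> C0 -> Cmul z (Cinv z) = C1.
Proof.
  intro H. assert (fst z * fst z + snd z * snd z <> 0).
  { intro E. apply H. destruct z as [a b]; simpl in *; apply C_eq; simpl; nra. }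
  apply C_eq; simpl; field; auto.
Qed.

Lemma Cmul_inv_uniq a b : Cmul a b = C1 -> b = Cinv a.
Proof.
  intro H. assert (Ha : a <> C0)
    by (intro E; subst; rewrite Cmul_C0_l in H; apply C1_neq_C0; auto).
  rewrite <- (Cmul_C1_l b), <- (Cmul_inv a Ha), (Cmul_comm a), Cmul_assoc, H.
  rewrite Cmul_comm, Cmul_C1_l; auto.
Qed.

Lemma Cmul_cancel a z : z <> C0 -> Cmul a z = z -> a = C1.
Proof.
  intros Hz H. transitivity (Cmul (Cmul a z) (Cinv z)).
  - rewrite Cmul_assoc, Cmul_inv by auto. rewrite Cmul_comm, Cmul_C1_l; auto.
  - rewrite H; apply Cmul_inv; auto.
Qed.

Lemma Cnorm_inv z : z <> C0 -> Cnorm (Cinv z) = / Cnorm z.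
Proof.
  intro H. assert (Cnorm z <> 0) by (intro E; apply H, Cnorm_eq0, E).
  pose proof (f_equal Cnorm (Cmul_inv z H)) as E. rewrite Cnorm_mul, Cnorm_C1 in E.
  field_simplify_eq; auto. lra.
Qed.

Lemma Cinv_lip a b c : 0 < c -> c <= Cnorm a -> c <= Cnorm b ->
  Cnorm (Csub (Cinv a) (Cinv b)) <= / (c * c) * Cnorm (Csub a b).
Proof.
  intros Hc Ha Hb.
  assert (na : a <> C0) by (apply Cnorm_pos_neq; lra).
  assert (nb : b <> C0) by (apply Cnorm_pos_neq; lra).
  assert (E : Csub (Cinv a) (Cinv b) = Cmul (Cmul (Cinv a) (Cinv b)) (Csub b a)).
  { assert (fst a * fst a + snd a * snd a <> 0)
      by (intro E; apply na; destruct a; apply C_eq; simpl in *; nra).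
    assert (fst b * fst b + snd b * snd b <> 0)
      by (intro E; apply nb; destruct b; apply C_eq; simpl in *; nra).
    apply C_eq; simpl; field; auto. }
  rewrite E, !Cnorm_mul, Cnorm_inv, Cnorm_inv, Cnorm_opp_sub by auto.
  pose proof (Cnorm_ge0 (Csub a b)).
  assert (/ Cnorm a <= / c) by (apply Rinv_le_contravar; lra).
  assert (/ Cnorm b <= / c) by (apply Rinv_le_contravar; lra).
  assert (0 <= / Cnorm a) by (apply Rlt_le, Rinv_0_lt_compat; lra).
  assert (0 <= / Cnorm b) by (apply Rlt_le, Rinv_0_lt_compat; lra).
  rewrite Rinv_mult. apply Rmult_le_compat_r; auto. apply Rmult_le_compat; auto.
Qed.

Definition is_ultrafilter {T : Type} (U : (T -> Prop) -> Prop) : Prop :=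
  (forall A A', U A -> (forall t, A t -> A' t) -> U A') /\
  (forall A A', U A -> U A' -> U (fun t => A t /\ A' t)) /\
  (forall A, U A -> exists t, A t) /\
  (forall A, U A \/ U (fun t => ~ A t)).

Definition finite_intersection_property {T : Type} (B : (T -> Prop) -> Prop) : Prop :=
  forall l : list (T -> Prop), Forall B l -> exists t, Forall (fun A => A t) l.

Module UltrafilterExistence.
Import ssreflect ssrbool boolp classical_sets filter.

Lemma ultrafilter_extends (T : Type) (B : (T -> Prop) -> Prop) :
  finite_intersection_property B ->
  exists U : (T -> Prop) -> Prop, is_ultrafilter U /\ forall A, B A -> U A.
Proof.
move=> HB.
pose F := fun A : T -> Prop =>
  exists l, Forall B l /\ forall t, Forall (fun A => A t) l -> A t.
have FF : ProperFilter (F : set_system T).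
  apply: Build_ProperFilter_ex.
    move=> P [l [Bl Hl]]; have [t Ht] := HB l Bl; by exists t; apply: Hl.
  split.
  - by exists nil; split.
  - move=> P Q [l1 [B1 H1]] [l2 [B2 H2]]; exists (l1 ++ l2); split.
      by apply/Forall_app; split.
    by move=> t /Forall_app [] /H1 ? /H2 ?; split.
  - move=> P Q PQ [l [Bl Hl]]; exists l; split => // t /Hl; exact: PQ.
have [G [GU FG]] := ultraFilterLemma FF.
exists G; split; last first.
  move=> A BA; apply: FG; exists (A :: nil); split; first by constructor.
  by move=> t Ht; inversion Ht.
split; [|split; [|split]].
- by move=> A A' GA AA'; apply: (@filterS _ G _ A).
- by move=> A A'; apply: filterI.
- by move=> A; apply: filter_ex.
- by move=> A; apply: (in_ultra_setVsetC A GU).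
Qed.

End UltrafilterExistence.

Section UltrafilterLimits.
Variables (T : Type) (U : (T -> Prop) -> Prop).
Hypothesis HU : is_ultrafilter U.

Lemma UF_mono A A' : U A -> (forall t, A t -> A' t) -> U A'.
Proof. apply HU. Qed.

Lemma UF_and A A' : U A -> U A' -> U (fun t => A t /\ A' t).
Proof. apply HU. Qed.

Lemma UF_ex A : U A -> exists t, A t.
Proof. apply HU. Qed.

Lemma UF_ultra A : U A \/ U (fun t => ~ A t).
Proof. apply HU. Qed.

Lemma UF_full : U (fun _ => True).
Proof.
  destruct (UF_ultra (fun _ => True)) as [|H]; auto.
  destruct (UF_ex _ H); tauto.
Qed.

Lemma UF_all (A : T -> Prop) : (forall t, A t) -> U A.
Proof. intros H. apply (UF_mono _ _ UF_full); auto. Qed.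

(** A bounded real family has a limit along U: the supremum of the c
    with g >= c U-almost everywhere. *)
Lemma ulim_real (g : T -> R) M : (forall t, Rabs (g t) <= M) ->
  exists L, forall e, 0 < e -> U (fun t => Rabs (g t - L) < e).
Proof.
  intros HM.
  assert (Hg : forall t, - M <= g t <= M).
  { intros t. specialize (HM t). pose proof (Rle_abs (g t)).
    pose proof (Rle_abs (- g t)). rewrite Rabs_Ropp in *. lra. }
  set (E := fun c => U (fun t => c <= g t)).
  assert (Hb : bound E).
  { exists M. intros c Ec. destruct (UF_ex _ Ec) as [t Ht]. specialize (Hg t). lra. }
  assert (Hne : exists c, E c).
  { exists (- M). apply UF_all. intros t; apply Hg. }
  destruct (completeness E Hb Hne) as [L [HL1 HL2]].
  exists L. intros e He.
  assert (Below : U (fun t => L - e < g t)).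
  { destruct (classic (exists c, E c /\ L - e < c)) as [[c [Ec Hc]]|Hn].
    - apply (UF_mono _ _ Ec). intros; lra.
    - exfalso. assert (L <= L - e); [|lra]. apply HL2. intros c Ec.
      destruct (Rle_dec c (L - e)); auto. exfalso; apply Hn; exists c; split; auto; lra. }
  assert (Above : U (fun t => g t < L + e)).
  { destruct (UF_ultra (fun t => g t < L + e)) as [|Hc]; auto. exfalso.
    assert (E (L + e)) by (apply (UF_mono _ _ Hc); intros t Ht; lra).
    specialize (HL1 _ H). lra. }
  apply (UF_mono _ _ (UF_and _ _ Below Above)). intros t [H1 H2]. apply Rabs_def1; lra.
Qed.

Definition ULim (h : T -> C) (L : C) : Prop :=
  forall e, 0 < e -> U (fun t => Cnorm (Csub (h t) L) < e).

Lemma ulim_exists (h : T -> C) M : (forall t, Cnorm (h t) <= M) -> exists L, ULim h L.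
Proof.
  intros HM.
  destruct (ulim_real (fun t => fst (h t)) M) as [L1 H1].
  { intros t; eapply Rle_trans; [apply Cnorm_fst|auto]. }
  destruct (ulim_real (fun t => snd (h t)) M) as [L2 H2].
  { intros t; eapply Rle_trans; [apply Cnorm_snd|auto]. }
  exists (L1, L2). intros e He.
  apply (UF_mono _ _ (UF_and _ _ (H1 (e/2) ltac:(lra)) (H2 (e/2) ltac:(lra)))).
  intros t [A1 A2]. eapply Rle_lt_trans; [apply Cnorm_le_abs|]. simpl. lra.
Qed.

Lemma ulim_bound h L c r :
  ULim h L -> U (fun t => Cnorm (Csub (h t) c) <= r) -> Cnorm (Csub L c) <= r.
Proof.
  intros HL Hr. destruct (Rle_dec (Cnorm (Csub L c)) r) as [|Hn]; auto. exfalso.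
  apply Rnot_le_lt in Hn.
  destruct (UF_ex _ (UF_and _ _ (HL (Cnorm (Csub L c) - r) ltac:(lra)) Hr)) as [t [A1 A2]].
  pose proof (Cnorm_tri L (h t) c). rewrite (Cnorm_opp_sub L (h t)) in H. lra.
Qed.

Lemma ulim_unique h L1 L2 : ULim h L1 -> ULim h L2 -> L1 = L2.
Proof.
  intros H1 H2. apply Cnorm_small_eq. intros e He.
  destruct (UF_ex _ (UF_and _ _ (H1 (e/2) ltac:(lra)) (H2 (e/2) ltac:(lra)))) as [t [A1 A2]].
  pose proof (Cnorm_tri L1 (h t) L2). rewrite (Cnorm_opp_sub L1 (h t)) in H. lra.
Qed.

Lemma ulim_const c : ULim (fun _ => c) c.
Proof.
  intros e He. apply UF_all. intros.
  replace (Csub c c) with C0 by (apply C_eq; simpl; ring). rewrite Cnorm_C0; auto.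
Qed.

Lemma ulim_add h1 h2 L1 L2 :
  ULim h1 L1 -> ULim h2 L2 -> ULim (fun t => Cadd (h1 t) (h2 t)) (Cadd L1 L2).
Proof.
  intros H1 H2 e He.
  apply (UF_mono _ _ (UF_and _ _ (H1 (e/2) ltac:(lra)) (H2 (e/2) ltac:(lra)))).
  intros t [A1 A2].
  replace (Csub (Cadd (h1 t) (h2 t)) (Cadd L1 L2)) with (Cadd (Csub (h1 t) L1) (Csub (h2 t) L2))
    by (apply C_eq; simpl; ring).
  eapply Rle_lt_trans; [apply Cnorm_add|]. lra.
Qed.

Lemma ulim_mul h1 h2 L1 L2 M : (forall t, Cnorm (h2 t) <= M) ->
  ULim h1 L1 -> ULim h2 L2 -> ULim (fun t => Cmul (h1 t) (h2 t)) (Cmul L1 L2).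
Proof.
  intros HM H1 H2 e He.
  assert (HM0 : 0 <= M)
    by (destruct (UF_ex _ UF_full) as [t _]; pose proof (Cnorm_ge0 (h2 t)); specialize (HM t); lra).
  set (K := M + Cnorm L1 + 1).
  assert (HK : M + Cnorm L1 < K) by (unfold K; lra).
  pose proof (Cnorm_ge0 L1).
  set (d := e / (2 * K)).
  assert (Hd : 0 < d) by (unfold d; apply Rdiv_lt_0_compat; lra).
  assert (HdK : d * K = e / 2) by (unfold d; field; lra).
  apply (UF_mono _ _ (UF_and _ _ (H1 d Hd) (H2 d Hd))).
  intros t [A1 A2]. specialize (HM t).
  replace (Csub (Cmul (h1 t) (h2 t)) (Cmul L1 L2)) with
    (Cadd (Cmul (Csub (h1 t) L1) (h2 t)) (Cmul L1 (Csub (h2 t) L2)))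
    by (apply C_eq; simpl; ring).
  eapply Rle_lt_trans; [apply Cnorm_add|]. rewrite !Cnorm_mul.
  pose proof (Cnorm_ge0 (h2 t)); pose proof (Cnorm_ge0 (Csub (h1 t) L1));
  pose proof (Cnorm_ge0 (Csub (h2 t) L2)).
  assert (Cnorm (Csub (h1 t) L1) * Cnorm (h2 t) <= d * M) by (apply Rmult_le_compat; lra).
  assert (Cnorm L1 * Cnorm (Csub (h2 t) L2) <= Cnorm L1 * d) by (apply Rmult_le_compat_l; lra).
  nra.
Qed.

End UltrafilterLimits.

Section Characters.
Variables (S : Type) (A : (S -> C) -> Prop) (m : (S -> C) -> C).
Hypothesis Hm : is_character S A m.
Hypothesis A_const : forall c, A (fun _ => c).
Hypothesis A_scal : forall c f, A f -> A (fun x => Cmul c (f x)).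

Lemma ch_one : m (fun _ => C1) = C1.
Proof.
  destruct Hm as [_ [_ [Hmul [f0 [Af0 Hf0]]]]].
  apply (Cmul_cancel _ (m f0)); auto.
  rewrite <- Hmul; auto. f_equal. apply functional_extensionality; intros; apply Cmul_C1_l.
Qed.

Lemma ch_const c : m (fun _ => c) = c.
Proof.
  replace (fun _ : S => c) with (fun x : S => Cmul c ((fun _ => C1) x))
    by (apply functional_extensionality; intros; rewrite Cmul_comm; apply Cmul_C1_l).
  rewrite (proj1 (proj2 Hm)), ch_one by auto. rewrite Cmul_comm; apply Cmul_C1_l.
Qed.

Lemma ch_sub f g : A f -> A g -> m (fun x => Csub (f x) (g x)) = Csub (m f) (m g).
Proof.
  intros Af Ag.
  replace (fun x => Csub (f x) (g x))
    with (fun x => Cadd (f x) ((fun y => Cmul (-1, 0) (g y)) x))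
    by (apply functional_extensionality; intros; apply C_eq; simpl; ring).
  rewrite (proj1 Hm), (proj1 (proj2 Hm)) by auto. apply C_eq; simpl; ring.
Qed.

Lemma ch_inverse f g : A f -> A g -> (forall x, Cmul (f x) (g x) = C1) ->
  Cmul (m f) (m g) = C1.
Proof.
  intros Af Ag Hfg. rewrite <- (proj1 (proj2 (proj2 Hm))) by auto.
  replace (fun x => Cmul (f x) (g x)) with (fun _ : S => C1)
    by (apply functional_extensionality; intros; auto).
  apply ch_one.
Qed.

End Characters.

Lemma Forall_lt_weaken {X : Type} (P : X -> R) l e e' :
  e <= e' -> Forall (fun x => P x < e) l -> Forall (fun x => P x < e') l.
Proof. intros H. apply Forall_impl. intros; lra. Qed.

Fixpoint history {X : Type} (G : list X -> X) (n : nat) : list X :=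
  match n with
  | O => nil
  | Datatypes.S n' => history G n' ++ G (history G n') :: nil
  end.

Lemma history_contains {X : Type} (G : list X -> X) k n :
  (k < n)%nat -> In (G (history G k)) (history G n).
Proof.
  induction n as [|n IH]; intros Hkn; [lia|]. simpl. apply in_or_app.
  destruct (Nat.eq_dec k n) as [->|Hne]; [right; left; auto|left; apply IH; lia].
Qed.

Section Semigroup.
Variables (S : Type) (op : S -> S -> S) (open : (S -> Prop) -> Prop).
Hypothesis Htop : is_topology S open.
Hypothesis Hassoc : forall a b c, op (op a b) c = op a (op b c).
Hypothesis Hlc : forall s, continuous_SS S open (fun x => op s x).

Notation cont := (continuous_C S open).
Notation CBf := (CB S open).
Notation chCB := (is_character S CBf).
Notation Lmcf := (Lmc S op open).
Notation SL := (SLmc S op open).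
Notation clE := (in_cl_eps S op open).

Lemma cont_const c : cont (fun _ => c).
Proof.
  intros s e He. exists (fun _ => True). split; [apply Htop|split; auto].
  intros. replace (Csub c c) with C0 by (apply C_eq; simpl; ring). rewrite Cnorm_C0; auto.
Qed.

Lemma cont_lip f g K : cont f -> 0 < K ->
  (forall x y, Cnorm (Csub (g x) (g y)) <= K * Cnorm (Csub (f x) (f y))) -> cont g.
Proof.
  intros Hf HK Hl s e He. destruct (Hf s (e / K)) as [U [HU [Us HUx]]].
  { apply Rdiv_lt_0_compat; auto. }
  exists U; split; auto; split; auto. intros x Ux.
  eapply Rle_lt_trans; [apply Hl|]. specialize (HUx x Ux).
  apply Rmult_lt_compat_l with (r := K) in HUx; auto.
  replace (K * (e / K)) with e in HUx by (field; lra). auto.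
Qed.

Lemma cont_add f g : cont f -> cont g -> cont (fun x => Cadd (f x) (g x)).
Proof.
  intros Hf Hg s e He.
  destruct (Hf s (e/2)) as [U [HU [Us HUx]]]; [lra|].
  destruct (Hg s (e/2)) as [V [HV [Vs HVx]]]; [lra|].
  exists (fun x => U x /\ V x); split; [apply Htop; auto|split; auto].
  intros x [Ux Vx].
  replace (Csub (Cadd (f x) (g x)) (Cadd (f s) (g s)))
    with (Cadd (Csub (f x) (f s)) (Csub (g x) (g s))) by (apply C_eq; simpl; ring).
  eapply Rle_lt_trans; [apply Cnorm_add|]. specialize (HUx x Ux); specialize (HVx x Vx); lra.
Qed.

Lemma cont_mul f g : cont f -> cont g -> cont (fun x => Cmul (f x) (g x)).
Proof.
  intros Hf Hg s e He.
  set (K := Cnorm (f s) + Cnorm (g s) + 1).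
  pose proof (Cnorm_ge0 (f s)); pose proof (Cnorm_ge0 (g s)).
  set (d := Rmin 1 (e / (2 * K))).
  assert (Hd : 0 < d) by (apply Rmin_glb_lt; [lra|apply Rdiv_lt_0_compat; unfold K; lra]).
  assert (Hd1 : d <= 1) by apply Rmin_l.
  assert (HdK : d * K <= e / 2).
  { apply Rle_trans with (e / (2 * K) * K); [apply Rmult_le_compat_r, Rmin_r; unfold K; lra|].
    right; field; unfold K; lra. }
  destruct (Hf s d) as [U [HU [Us HUx]]]; auto.
  destruct (Hg s d) as [V [HV [Vs HVx]]]; auto.
  exists (fun x => U x /\ V x); split; [apply Htop; auto|split; auto].
  intros x [Ux Vx]. specialize (HUx x Ux); specialize (HVx x Vx).
  replace (Csub (Cmul (f x) (g x)) (Cmul (f s) (g s))) with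
    (Cadd (Cmul (Csub (f x) (f s)) (g x)) (Cmul (f s) (Csub (g x) (g s))))
    by (apply C_eq; simpl; ring).
  eapply Rle_lt_trans; [apply Cnorm_add|]. rewrite !Cnorm_mul.
  assert (Cnorm (g x) <= Cnorm (g s) + 1).
  { pose proof (Cnorm_rev_tri (g x) (g s)). lra. }
  pose proof (Cnorm_ge0 (g x)); pose proof (Cnorm_ge0 (Csub (f x) (f s)));
  pose proof (Cnorm_ge0 (Csub (g x) (g s))).
  assert (Cnorm (Csub (f x) (f s)) * Cnorm (g x) <= d * (Cnorm (g s) + 1))
    by (apply Rmult_le_compat; lra).
  assert (Cnorm (f s) * Cnorm (Csub (g x) (g s)) <= Cnorm (f s) * d)
    by (apply Rmult_le_compat_l; lra).
  unfold K in HdK. nra.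
Qed.

Lemma cont_comp f phi : cont f -> continuous_SS S open phi -> cont (fun x => f (phi x)).
Proof.
  intros Hf Hp s e He. destruct (Hf (phi s) e He) as [U [HU [Us HUx]]].
  exists (fun x => U (phi x)); split; [apply Hp; auto|split; auto].
Qed.

Lemma CB_bounded f : CBf f -> bounded_C S f.
Proof. intros []; auto. Qed.

Lemma CB_ext f g : CBf f -> (forall x, f x = g x) -> CBf g.
Proof. intros H E. replace g with f; auto. apply functional_extensionality; auto. Qed.

Lemma CB_const c : CBf (fun _ => c).
Proof. split; [apply cont_const|exists (Cnorm c); intros; lra]. Qed.

Lemma CB_add f g : CBf f -> CBf g -> CBf (fun x => Cadd (f x) (g x)).
Proof.
  intros [Hf [M HM]] [Hg [N HN]]; split; [apply cont_add; auto|].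
  exists (M + N); intros x. eapply Rle_trans; [apply Cnorm_add|].
  specialize (HM x); specialize (HN x); lra.
Qed.

Lemma CB_mul f g : CBf f -> CBf g -> CBf (fun x => Cmul (f x) (g x)).
Proof.
  intros [Hf [M HM]] [Hg [N HN]]; split; [apply cont_mul; auto|].
  exists (M * N); intros x. rewrite Cnorm_mul.
  apply Rmult_le_compat; auto using Cnorm_ge0.
Qed.

Lemma CB_scal c f : CBf f -> CBf (fun x => Cmul c (f x)).
Proof. intros H; apply (CB_mul (fun _ => c) f); auto; apply CB_const. Qed.

Lemma CB_sub f g : CBf f -> CBf g -> CBf (fun x => Csub (f x) (g x)).
Proof.
  intros Hf Hg. apply (CB_ext (fun x => Cadd (f x) (Cmul (-1, 0) (g x)))).
  - apply CB_add; auto; apply CB_scal; auto.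
  - intros; apply C_eq; simpl; ring.
Qed.

Lemma CB_conj f : CBf f -> CBf (fun x => Cconj (f x)).
Proof.
  intros [Hc [M HM]]; split.
  - apply (cont_lip f _ 1); auto; [lra|]. intros x y.
    replace (Csub (Cconj (f x)) (Cconj (f y))) with (Cconj (Csub (f x) (f y)))
      by (apply C_eq; simpl; ring).
    rewrite Cnorm_conj; lra.
  - exists M; intros x; rewrite Cnorm_conj; auto.
Qed.

Lemma CB_comp f phi : CBf f -> continuous_SS S open phi -> CBf (fun x => f (phi x)).
Proof. intros [Hc [M HM]] Hp; split; [apply cont_comp; auto|exists M; auto]. Qed.

Lemma CB_Ls s f : CBf f -> CBf (Ls S op s f).
Proof. intros H. apply (CB_comp f (fun x => op s x)); auto. Qed.

Lemma CB_inv f c : CBf f -> 0 < c -> (forall x, c <= Cnorm (f x)) -> CBf (fun x => Cinv (f x)).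
Proof.
  intros [Hc _] Hc0 Hb; split.
  - apply (cont_lip f _ (/ (c * c))); auto.
    + apply Rinv_0_lt_compat; nra.
    + intros; apply Cinv_lip; auto.
  - exists (/ c). intros x. rewrite Cnorm_inv.
    + apply Rinv_le_contravar; auto.
    + apply Cnorm_pos_neq. specialize (Hb x); lra.
Qed.


Lemma chCB_unit m f c : chCB m -> CBf f -> 0 < c -> (forall x, c <= Cnorm (f x)) ->
  Cmul (m f) (m (fun x => Cinv (f x))) = C1.
Proof.
  intros Hm Hf Hc Hb. apply (ch_inverse S CBf m Hm CB_const); auto.
  - apply (CB_inv f c); auto.
  - intros x. apply Cmul_inv, Cnorm_pos_neq. specialize (Hb x); lra.
Qed.

Lemma chCB_bound m f M : chCB m -> CBf f -> (forall x, Cnorm (f x) <= M) -> Cnorm (m f) <= M.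
Proof.
  intros Hm Hf HM. destruct (Rle_dec (Cnorm (m f)) M) as [|Hgt]; auto. exfalso.
  apply Rnot_le_lt in Hgt.
  (* k = f - m f is bounded away from 0 but m k = 0 *)
  set (k := fun x => Csub (f x) (m f)).
  assert (Hk : CBf k) by (apply CB_sub; auto; apply CB_const).
  assert (mk : m k = C0).
  { unfold k. change (fun x => Csub (f x) (m f)) with (fun x => Csub (f x) ((fun _ => m f) x)).
    rewrite (ch_sub S CBf m Hm CB_scal), (ch_const S CBf m Hm CB_const)
      by auto using CB_const.
    apply C_eq; simpl; ring. }
  assert (kb : forall x, Cnorm (m f) - M <= Cnorm (k x)).
  { intros x. unfold k. rewrite Cnorm_opp_sub.
    pose proof (Cnorm_rev_tri (m f) (f x)). specialize (HM x). lra. }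
  pose proof (chCB_unit m k (Cnorm (m f) - M) Hm Hk ltac:(lra) kb) as E.
  rewrite mk, Cmul_C0_l in E. apply C1_neq_C0; auto.
Qed.

Lemma chCB_inv m f c : chCB m -> CBf f -> 0 < c -> (forall x, c <= Cnorm (f x)) ->
  m (fun x => Cinv (f x)) = Cinv (m f) /\ c <= Cnorm (m f).
Proof.
  intros Hm Hf Hc Hb.
  pose proof (chCB_unit m f c Hm Hf Hc Hb) as E.
  split; [apply Cmul_inv_uniq; auto|].
  assert (Hi : Cnorm (m (fun x => Cinv (f x))) <= / c).
  { apply chCB_bound; auto; [apply (CB_inv f c); auto|]. intros x. rewrite Cnorm_inv.
    - apply Rinv_le_contravar; auto.
    - apply Cnorm_pos_neq; specialize (Hb x); lra. }
  apply (f_equal Cnorm) in E. rewrite Cnorm_C1, Cnorm_mul in E.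
  pose proof (Cnorm_ge0 (m f)). pose proof (Cnorm_ge0 (m (fun x => Cinv (f x)))).
  assert (1 <= Cnorm (m f) * / c) by (rewrite <- E; apply Rmult_le_compat_l; auto).
  apply Rmult_le_compat_r with (r := c) in H1; [|lra].
  replace (Cnorm (m f) * / c * c) with (Cnorm (m f)) in H1 by (field; lra). lra.
Qed.

Lemma chCB_conj m : chCB m -> chCB (fun g => Cconj (m (fun x => Cconj (g x)))).
Proof.
  intros Hm. pose proof Hm as [Hadd [Hscal [Hmul _]]].
  split; [|split; [|split]].
  - intros f g Hf Hg.
    replace (fun x => Cconj (Cadd (f x) (g x)))
      with (fun x => Cadd ((fun y => Cconj (f y)) x) ((fun y => Cconj (g y)) x))
      by (apply functional_extensionality; intros; apply C_eq; simpl; ring).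
    rewrite Hadd by (apply CB_conj; auto). apply C_eq; simpl; ring.
  - intros c f Hf.
    replace (fun x => Cconj (Cmul c (f x)))
      with (fun x => Cmul (Cconj c) ((fun y => Cconj (f y)) x))
      by (apply functional_extensionality; intros; apply C_eq; simpl; ring).
    rewrite Hscal by (apply CB_conj; auto). apply C_eq; simpl; ring.
  - intros f g Hf Hg.
    replace (fun x => Cconj (Cmul (f x) (g x)))
      with (fun x => Cmul ((fun y => Cconj (f y)) x) ((fun y => Cconj (g y)) x))
      by (apply functional_extensionality; intros; apply C_eq; simpl; ring).
    rewrite Hmul by (apply CB_conj; auto). apply C_eq; simpl; ring.
  - exists (fun _ => C1). split; [apply CB_const|].
    rewrite (ch_const S CBf m Hm CB_const), Cconj_conj. apply C1_neq_C0.
Qed.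

Lemma Lmc_CB f : Lmcf f -> CBf f.
Proof. intros []; auto. Qed.

Lemma Lmc_T m f : Lmcf f -> chCB m -> CBf (Tmu S op m f).
Proof. intros [_ H] Hm; apply H; auto. Qed.

Lemma Lmc_bounded f : Lmcf f -> bounded_C S f.
Proof. intros; apply CB_bounded, Lmc_CB; auto. Qed.

Lemma Lmc_closed (F : C -> C -> C) f g :
  (forall h k, CBf h -> CBf k -> CBf (fun x => F (h x) (k x))) ->
  (forall m h k, chCB m -> CBf h -> CBf k ->
     m (fun x => F (h x) (k x)) = F (m h) (m k)) ->
  Lmcf f -> Lmcf g -> Lmcf (fun x => F (f x) (g x)).
Proof.
  intros HCB Hch Hf Hg. split; [apply HCB; apply Lmc_CB; auto|]. intros m Hm.
  apply (CB_ext (fun s => F (Tmu S op m f s) (Tmu S op m g s))).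
  - apply HCB; apply Lmc_T; auto.
  - intros s. unfold Tmu. symmetry.
    apply (Hch m (Ls S op s f) (Ls S op s g)); auto; apply CB_Ls, Lmc_CB; auto.
Qed.

Lemma Lmc_const c : Lmcf (fun _ => c).
Proof.
  split; [apply CB_const|]. intros m Hm. apply (CB_ext (fun _ => c)); [apply CB_const|].
  intros s. unfold Tmu, Ls. rewrite (ch_const S CBf m Hm CB_const); auto.
Qed.

Lemma Lmc_add f g : Lmcf f -> Lmcf g -> Lmcf (fun x => Cadd (f x) (g x)).
Proof. apply Lmc_closed; [apply CB_add|intros m h k Hm; apply Hm]. Qed.

Lemma Lmc_mult f g : Lmcf f -> Lmcf g -> Lmcf (fun x => Cmul (f x) (g x)).
Proof. apply Lmc_closed; [apply CB_mul|intros m h k Hm; apply Hm]. Qed.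

Lemma Lmc_scal c f : Lmcf f -> Lmcf (fun x => Cmul c (f x)).
Proof. intros Hf. apply (Lmc_mult (fun _ => c) f); auto. apply Lmc_const. Qed.

Lemma Lmc_sub f g : Lmcf f -> Lmcf g -> Lmcf (fun x => Csub (f x) (g x)).
Proof.
  apply Lmc_closed; [apply CB_sub|].
  intros m h k Hm; apply (ch_sub S CBf m Hm CB_scal).
Qed.

Lemma Lmc_conj f : Lmcf f -> Lmcf (fun x => Cconj (f x)).
Proof.
  intros Hf. split; [apply CB_conj, Lmc_CB; auto|]. intros m Hm.
  apply (CB_ext (fun s => Cconj (Tmu S op (fun g => Cconj (m (fun x => Cconj (g x)))) f s))).
  - apply CB_conj, Lmc_T; auto. apply chCB_conj; auto.
  - intros s. unfold Tmu, Ls. rewrite Cconj_conj. reflexivity.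
Qed.

Lemma Lmc_Ls s f : Lmcf f -> Lmcf (Ls S op s f).
Proof.
  intros Hf. split; [apply CB_Ls, Lmc_CB; auto|]. intros m Hm.
  apply (CB_ext (fun t => Tmu S op m f (op s t))).
  - apply (CB_comp (Tmu S op m f) (fun t => op s t)); auto. apply Lmc_T; auto.
  - intros t. unfold Tmu, Ls. f_equal. apply functional_extensionality; intros.
    rewrite Hassoc; auto.
Qed.

Lemma Lmc_inv f c : Lmcf f -> 0 < c -> (forall x, c <= Cnorm (f x)) ->
  Lmcf (fun x => Cinv (f x)).
Proof.
  intros Hf Hc Hb. split; [apply (CB_inv f c); auto; apply Lmc_CB; auto|]. intros m Hm.
  assert (H : forall s, m (Ls S op s (fun x => Cinv (f x))) = Cinv (m (Ls S op s f))
                        /\ c <= Cnorm (m (Ls S op s f))).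
  { intros s. apply (chCB_inv m (Ls S op s f) c); auto.
    - apply CB_Ls, Lmc_CB; auto.
    - intros x; apply Hb. }
  apply (CB_ext (fun s => Cinv (Tmu S op m f s))).
  - apply (CB_inv _ c); auto. apply Lmc_T; auto. intros s; apply H.
  - intros s. unfold Tmu. symmetry; apply H.
Qed.

Lemma SL_const nu c : SL nu -> nu (fun _ => c) = c.
Proof. intros H; apply (ch_const S Lmcf nu H Lmc_const). Qed.

Fixpoint deviation (nu : (S -> C) -> C) (fs : list (S -> C)) : S -> C :=
  match fs with
  | nil => fun _ => C0
  | f :: fs' => fun x =>
      Cadd (Cmul (Csub (f x) (nu f)) (Cconj (Csub (f x) (nu f)))) (deviation nu fs' x)
  end.

Lemma deviation_Lmc nu fs : Forall Lmcf fs -> Lmcf (deviation nu fs).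
Proof.
  induction 1 as [|f fs Hf Hfs IH]; simpl; [apply Lmc_const|].
  apply Lmc_add; auto.
  assert (Hg : Lmcf (fun x => Csub (f x) ((fun _ => nu f) x)))
    by (apply Lmc_sub; auto; apply Lmc_const).
  apply (Lmc_mult _ (fun y => Cconj (Csub (f y) (nu f)))); auto. apply Lmc_conj; auto.
Qed.

Lemma deviation_annihilated nu fs : SL nu -> Forall Lmcf fs -> nu (deviation nu fs) = C0.
Proof.
  intros Hn. pose proof Hn as [Hadd [_ [Hmul _]]].
  induction 1 as [|f fs Hf Hfs IH]; simpl; [apply SL_const; auto|].
  assert (Hg : Lmcf (fun x => Csub (f x) ((fun _ => nu f) x)))
    by (apply Lmc_sub; auto; apply Lmc_const).
  assert (Hgc : Lmcf (fun y => Cconj (Csub (f y) (nu f)))) by (apply Lmc_conj; auto).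
  rewrite Hadd, IH by (auto using deviation_Lmc; apply (Lmc_mult _ _ Hg Hgc)).
  rewrite (Hmul (fun x => Csub (f x) (nu f))) by auto.
  change (fun x => Csub (f x) (nu f)) with (fun x => Csub (f x) ((fun _ => nu f) x)).
  rewrite (ch_sub S Lmcf nu Hn Lmc_scal), SL_const by auto using Lmc_const.
  apply C_eq; simpl; ring.
Qed.

Lemma deviation_cons nu f fs x :
  fst (deviation nu (f :: fs) x)
  = Cnorm (Csub (f x) (nu f)) * Cnorm (Csub (f x) (nu f)) + fst (deviation nu fs x).
Proof. rewrite <- Cmul_conj_fst. reflexivity. Qed.

Lemma deviation_ge nu fs x f : In f fs ->
  Cnorm (Csub (f x) (nu f)) * Cnorm (Csub (f x) (nu f)) <= fst (deviation nu fs x).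
Proof.
  assert (Hpos : forall fs, 0 <= fst (deviation nu fs x)).
  { induction fs0 as [|g fs0 IH]; [simpl; lra|]. rewrite deviation_cons.
    pose proof (Cnorm_ge0 (Csub (g x) (nu g))). nra. }
  induction fs as [|g fs IH]; [simpl; tauto|]. rewrite deviation_cons.
  pose proof (Cnorm_ge0 (Csub (g x) (nu g))). specialize (Hpos fs).
  intros [<-|Hin]; [lra|]. specialize (IH Hin). nra.
Qed.

(** Otherwise deviation nu fs would be bounded
    away from 0, hence invertible in Lmc(S), although nu annihilates it. *)
Lemma density nu fs e : SL nu -> Forall Lmcf fs -> 0 < e ->
  exists s, Forall (fun f => Cnorm (Csub (nu f) (f s)) < e) fs.
Proof.
  intros Hn Hfs He. apply NNPP; intro Hno.
  assert (Hbig : forall x, e * e <= Cnorm (deviation nu fs x)).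
  { intros x.
    assert (Hx : ~ Forall (fun f => Cnorm (Csub (nu f) (f x)) < e) fs) by (intro; apply Hno; eauto).
    rewrite Forall_forall in Hx. apply not_all_ex_not in Hx. destruct Hx as [f Hf].
    apply imply_to_and in Hf. destruct Hf as [Hin Hf]. apply Rnot_lt_le in Hf.
    rewrite Cnorm_opp_sub in Hf. pose proof (deviation_ge nu fs x f Hin).
    eapply Rle_trans; [|apply Cnorm_fst]. rewrite Rabs_right; nra. }
  assert (Hd : Lmcf (deviation nu fs)) by (apply deviation_Lmc; auto).
  assert (Hi : Lmcf (fun x => Cinv (deviation nu fs x))) by (apply (Lmc_inv _ (e * e)); auto; nra).
  assert (Hunit : forall x, Cmul (deviation nu fs x) (Cinv (deviation nu fs x)) = C1).
  { intros x. apply Cmul_inv, Cnorm_pos_neq. specialize (Hbig x); nra. }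
  pose proof (ch_inverse S Lmcf nu Hn Lmc_const _ _ Hd Hi Hunit) as E.
  rewrite deviation_annihilated, Cmul_C0_l in E; auto. apply C1_neq_C0; auto.
Qed.

Definition ulim_char {T : Type} (U : (T -> Prop) -> Prop) (p : T -> S) : (S -> C) -> C :=
  fun g => epsilon (inhabits C0) (fun L => ULim T U (fun t => g (p t)) L).

Lemma ulim_char_spec {T} (U : (T -> Prop) -> Prop) p g : is_ultrafilter U -> bounded_C S g ->
  ULim T U (fun t => g (p t)) (ulim_char U p g).
Proof.
  intros HU [M HM]. unfold ulim_char. apply epsilon_spec. apply (ulim_exists T U HU _ M). intros; auto.
Qed.

Lemma ulim_char_eq {T} (U : (T -> Prop) -> Prop) p g L : is_ultrafilter U -> bounded_C S g ->
  ULim T U (fun t => g (p t)) L -> ulim_char U p g = L.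
Proof. intros HU Hg HL. apply (ulim_unique T U HU _ _ _ (ulim_char_spec U p g HU Hg) HL). Qed.

Lemma ulim_char_bound {T} (U : (T -> Prop) -> Prop) p g c r : is_ultrafilter U -> bounded_C S g ->
  U (fun t => Cnorm (Csub (g (p t)) c) <= r) -> Cnorm (Csub (ulim_char U p g) c) <= r.
Proof. intros HU Hb H. apply (ulim_bound T U HU (fun t => g (p t))); auto. apply ulim_char_spec; auto. Qed.

Lemma ulim_char_chCB {T} (U : (T -> Prop) -> Prop) p : is_ultrafilter U -> chCB (ulim_char U p).
Proof.
  intros HU.
  assert (Lim : forall g, CBf g -> ULim T U (fun t => g (p t)) (ulim_char U p g))
    by (intros; apply ulim_char_spec, CB_bounded; auto).
  split; [|split; [|split]].
  - intros f g Hf Hg. apply ulim_char_eq; auto using CB_bounded, CB_add.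
    apply (ulim_add T U HU); auto.
  - intros c f Hf. destruct (CB_bounded f Hf) as [M HM].
    apply ulim_char_eq; auto using CB_bounded, CB_scal.
    apply (ulim_mul T U HU (fun _ => c) (fun t => f (p t)) _ _ M); auto using ulim_const.
  - intros f g Hf Hg. destruct (CB_bounded g Hg) as [M HM].
    apply ulim_char_eq; auto using CB_bounded, CB_mul.
    apply (ulim_mul T U HU _ (fun t => g (p t)) _ _ M); auto.
  - exists (fun _ => C1). split; [apply CB_const|].
    rewrite (ulim_char_eq U p _ C1); auto using CB_bounded, CB_const, ulim_const.
    apply C1_neq_C0.
Qed.

Lemma ulim_char_cl {T} (U : (T -> Prop) -> Prop) (p : T -> S) : is_ultrafilter U ->
  clE (fun s => exists t, s = p t) (ulim_char U p).
Proof.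
  intros HU fs Hfs e He.
  assert (H : U (fun t => Forall (fun f => Cnorm (Csub (ulim_char U p f) (f (p t))) < e) fs)).
  { induction Hfs as [|f fs Hf Hfs IH]; [apply (UF_all T U HU); constructor|].
    pose proof (ulim_char_spec U p f HU (Lmc_bounded f Hf) e He) as Hl.
    apply (UF_mono T U HU _ _ (UF_and T U HU _ _ Hl IH)). intros t [A1 A2].
    constructor; auto. rewrite Cnorm_opp_sub; auto. }
  destruct (UF_ex T U HU _ H) as [t Ht]. exists (p t). split; [exists t; auto|exact Ht].
Qed.

Lemma chCB_SL m : chCB m -> SL m.
Proof.
  intros Hm. split; [|split; [|split]].
  - intros f g Hf Hg; apply Hm; apply Lmc_CB; auto.
  - intros c f Hf; apply Hm; apply Lmc_CB; auto.
  - intros f g Hf Hg; apply Hm; apply Lmc_CB; auto.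
  - exists (fun _ => C1). split; [apply Lmc_const|].
    rewrite (ch_const S CBf m Hm CB_const). apply C1_neq_C0.
Qed.

(** Every point of S^Lmc extends to a character of CB(S): take the limit of
    evaluations along an ultrafilter on S refining the neighbourhoods
    {s | |nu f - f s| < e}, which have the finite intersection property by
    density. *)
Lemma SLmc_extends nu : SL nu -> exists m, chCB m /\ forall f, Lmcf f -> m f = nu f.
Proof.
  intros Hn.
  set (B := fun A : S -> Prop => exists f e, Lmcf f /\ 0 < e /\
              forall s, Cnorm (Csub (nu f) (f s)) < e -> A s).
  assert (Hfip : finite_intersection_property B).
  { intros l Hl.
    assert (Hfs : exists fs e, Forall Lmcf fs /\ 0 < e /\ forall s,
              Forall (fun f => Cnorm (Csub (nu f) (f s)) < e) fs -> Forall (fun A => A s) l).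
    { induction Hl as [|A l [f [e1 [Hf [He1 HA]]]] Hl [fs [e2 [Hfs [He2 IH]]]]].
      - exists nil, 1. split; [constructor|split; [lra|constructor]].
      - exists (f :: fs), (Rmin e1 e2). split; [constructor; auto|]. split; [apply Rmin_glb_lt; auto|].
        intros s Hall. inversion Hall; subst. constructor.
        + apply HA. eapply Rlt_le_trans; [eauto|apply Rmin_l].
        + apply IH. eapply Forall_impl; [|eauto]. intros g Hg; simpl in Hg.
          eapply Rlt_le_trans; [eauto|apply Rmin_r]. }
    destruct Hfs as [fs [e [Hfs [He H]]]].
    destruct (density nu fs e Hn Hfs He) as [s Hs]. exists s; auto. }
  destruct (UltrafilterExistence.ultrafilter_extends S B Hfip) as [U [HU HBU]].
  exists (ulim_char U (fun s => s)). split; [apply ulim_char_chCB; auto|].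
  intros f Hf. apply Cnorm_small_eq. intros e He.
  apply ulim_char_bound; auto using Lmc_bounded.
  apply HBU. exists f, e. split; [auto|split; [auto|]].
  intros s Hs. rewrite Cnorm_opp_sub; lra.
Qed.

Lemma composed_char_SLmc (A : (S -> C) -> Prop) m m' :
  is_character S A m -> is_character S A m' -> (forall c, A (fun _ => c)) ->
  (forall s h, Lmcf h -> A (Ls S op s h)) -> (forall f, Lmcf f -> A (Tmu S op m f)) ->
  SL (fun g => m' (Tmu S op m g)).
Proof.
  intros Hm Hm' A_const HLs HT.
  pose proof Hm as [Hadd [Hscal [Hmul _]]].
  pose proof Hm' as [Hadd' [Hscal' [Hmul' _]]].
  assert (Tpt : forall F G, (forall s, m (Ls S op s F) = G s) -> Tmu S op m F = G)
    by (intros; apply functional_extensionality; auto).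
  split; [|split; [|split]].
  - intros f g Hf Hg.
    rewrite (Tpt _ (fun s => Cadd (Tmu S op m f s) (Tmu S op m g s))) by (intros s; apply Hadd; apply HLs; auto).
    apply Hadd'; auto.
  - intros c f Hf.
    rewrite (Tpt _ (fun s => Cmul c (Tmu S op m f s))) by (intros s; apply Hscal; apply HLs; auto).
    apply Hscal'; auto.
  - intros f g Hf Hg.
    rewrite (Tpt _ (fun s => Cmul (Tmu S op m f s) (Tmu S op m g s))) by (intros s; apply Hmul; apply HLs; auto).
    apply Hmul'; auto.
  - exists (fun _ => C1). split; [apply Lmc_const|].
    rewrite (Tpt _ (fun _ => C1)) by (intros s; apply (ch_one S A m Hm A_const)).
    rewrite (ch_one S A m' Hm' A_const). apply C1_neq_C0.
Qed.

(** T_phi f is in CB(S): it coincides with T_m f for an extension m of phi. *)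
Lemma Tmu_SLmc_CB phi f : SL phi -> Lmcf f -> CBf (Tmu S op phi f).
Proof.
  intros Hp Hf. destruct (SLmc_extends phi Hp) as [m [Hm Hmp]].
  apply (CB_ext (Tmu S op m f)); [apply Lmc_T; auto|].
  intros s. apply Hmp, Lmc_Ls; auto.
Qed.

(** T_phi f is in Lmc(S): for a character m' of CB(S),
    T_m' (T_phi f) = T_(m' o T_m) f by associativity, and m' o T_m is a
    point of S^Lmc. *)
Lemma Tmu_SLmc_Lmc phi f : SL phi -> Lmcf f -> Lmcf (Tmu S op phi f).
Proof.
  intros Hp Hf. split; [apply Tmu_SLmc_CB; auto|]. intros m' Hm'.
  destruct (SLmc_extends phi Hp) as [m [Hm Hmp]].
  apply (CB_ext (Tmu S op (fun g => m' (Tmu S op m g)) f)).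
  - apply Tmu_SLmc_CB; auto. apply (composed_char_SLmc CBf); auto using CB_const.
    + intros; apply CB_Ls, Lmc_CB; auto.
    + intros; apply Lmc_T; auto.
  - intros s. unfold Tmu. f_equal. apply functional_extensionality; intros x.
    change (Ls S op s (fun t => phi (Ls S op t f)) x) with (phi (Ls S op (op s x) f)).
    rewrite <- (Hmp (Ls S op (op s x) f)) by (apply Lmc_Ls; auto).
    f_equal. apply functional_extensionality; intros y. unfold Ls. rewrite Hassoc; auto.
Qed.

Lemma SLmc_mul_closed mu nu : SL mu -> SL nu -> SL (Lmc_mul S op mu nu).
Proof.
  intros Hmu Hnu. apply (composed_char_SLmc Lmcf nu mu Hnu Hmu Lmc_const).
  - intros s h; apply Lmc_Ls.
  - intros f; apply Tmu_SLmc_Lmc; auto.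
Qed.

Lemma cl_ext A mu mu' : Lmc_eq S op open mu mu' -> clE A mu -> clE A mu'.
Proof.
  intros E H fs Hfs e He. destruct (H fs Hfs e He) as [a [Ha Hf]]. exists a; split; auto.
  rewrite Forall_forall in *. intros f Hin. rewrite <- E; auto.
Qed.

Lemma not_principal_witness nu s : ~ Lmc_eq S op open nu (eps_map S s) ->
  exists f, Lmcf f /\ 0 < Cnorm (Csub (nu f) (f s)).
Proof.
  intros H. apply not_all_ex_not in H. destruct H as [f Hf].
  apply imply_to_and in Hf. destruct Hf as [Hf Hne].
  exists f. split; auto. apply Csub_neq_pos; auto.
Qed.

Lemma not_principal_avoids_prefix (y : nat -> S) nu :
  ~ (exists s, Lmc_eq S op open nu (eps_map S s)) -> forall k,
  exists fs e, Forall Lmcf fs /\ 0 < e /\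
    forall j, (j < k)%nat -> ~ Forall (fun f => Cnorm (Csub (nu f) (f (y j))) < e) fs.
Proof.
  intros Hne k. induction k as [|k [fs [e [Hfs [He IH]]]]].
  - exists nil, 1. split; [constructor|split; [lra|intros; lia]].
  - destruct (not_principal_witness nu (y k)) as [f [Hf Hd]]; [intro; apply Hne; eauto|].
    set (d := Cnorm (Csub (nu f) (f (y k)))) in *.
    exists (f :: fs), (Rmin e d). split; [constructor; auto|split; [apply Rmin_glb_lt; auto|]].
    intros j Hj HF. inversion HF as [|? ? Hfj Hfsj]; subst.
    destruct (Nat.eq_dec j k) as [->|Hjk].
    + pose proof (Rmin_r e d). fold d in Hfj. lra.
    + apply (IH j ltac:(lia)). eapply Forall_lt_weaken; [apply Rmin_l|exact Hfsj].
Qed.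

Lemma cl_tail (y : nat -> S) nu : ~ (exists s, Lmc_eq S op open nu (eps_map S s)) ->
  clE (fun s => exists n, s = y n) nu -> forall k, clE (fun s => exists n, (k < n)%nat /\ s = y n) nu.
Proof.
  intros Hne Hcl k fs Hfs e He.
  destruct (not_principal_avoids_prefix y nu Hne (k + 1)) as [fs0 [e0 [Hfs0 [He0 Hsep]]]].
  destruct (Hcl (fs ++ fs0) ltac:(apply Forall_app; auto) (Rmin e e0)
              ltac:(apply Rmin_glb_lt; auto)) as [a [[n ->] Ha]].
  apply Forall_app in Ha. destruct Ha as [Ha1 Ha2].
  exists (y n). split.
  - exists n. split; auto. destruct (Nat.lt_ge_cases k n) as [|Hnk]; auto. exfalso.
    apply (Hsep n); [lia|]. eapply Forall_lt_weaken; [apply Rmin_r|exact Ha2].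
  - eapply Forall_lt_weaken; [apply Rmin_l|exact Ha1].
Qed.

(** If mu is in the closure of eps(range x) and nu in the closure of every
    tail of eps(y), then mu nu is in the closure of eps{x_k y_n | k < n}:
    first approximate mu on the functions T_nu f by some x_k, then nu on the
    functions L_(x_k) f by some y_n with n > k. *)
Lemma product_in_cl (x y : nat -> S) mu nu : SL mu -> SL nu ->
  clE (fun s => exists n, s = x n) mu ->
  (forall k, clE (fun s => exists n, (k < n)%nat /\ s = y n) nu) ->
  clE (fun s => exists k n, (k < n)%nat /\ s = op (x k) (y n)) (Lmc_mul S op mu nu).
Proof.
  intros Hmu Hnu Hx Hy fs Hfs e He.
  assert (HT : Forall Lmcf (map (Tmu S op nu) fs)).
  { apply Forall_map. eapply Forall_impl; [|exact Hfs]. intros f; apply Tmu_SLmc_Lmc; auto. }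
  destruct (Hx _ HT (e/2) ltac:(lra)) as [a [[k ->] Ha]].
  assert (HL : Forall Lmcf (map (Ls S op (x k)) fs)).
  { apply Forall_map. eapply Forall_impl; [|exact Hfs]. intros f; apply Lmc_Ls. }
  destruct (Hy k _ HL (e/2) ltac:(lra)) as [b [[n [Hkn ->]] Hb]].
  exists (op (x k) (y n)). split; [exists k, n; auto|].
  rewrite Forall_map in Ha, Hb. rewrite Forall_forall in *. intros f Hin.
  specialize (Ha f Hin). specialize (Hb f Hin).
  unfold Lmc_mul, eps_map in *.
  change (Tmu S op nu f (x k)) with (nu (Ls S op (x k) f)) in Ha.
  change (Ls S op (x k) f (y n)) with (f (op (x k) (y n))) in Hb.
  pose proof (Cnorm_tri (mu (Tmu S op nu f)) (nu (Ls S op (x k) f)) (f (op (x k) (y n)))). lra.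
Qed.

Lemma commutative_closures_meet (x y : nat -> S) :
  SLmc_commutative S op open ->
  unbounded_seq S op open x -> unbounded_seq S op open y ->
  exists mu, SL mu /\
    clE (fun s => exists k n, (k < n)%nat /\ s = op (x k) (y n)) mu /\
    clE (fun s => exists k n, (k < n)%nat /\ s = op (y k) (x n)) mu.
Proof.
  intros Hc [mu [[Hmu Hmu'] Hmux]] [nu [[Hnu Hnu'] Hnuy]].
  exists (Lmc_mul S op mu nu). split; [apply SLmc_mul_closed; auto|]. split.
  - apply product_in_cl; auto. apply cl_tail; auto.
  - apply (cl_ext _ (Lmc_mul S op nu mu)).
    + intros f Hf. symmetry. apply Hc; auto.
    + apply product_in_cl; auto. apply cl_tail; auto.
Qed.

Lemma tail_ultrafilter : exists U : (nat -> Prop) -> Prop,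
  is_ultrafilter U /\ forall k, U (fun n => (k < n)%nat).
Proof.
  set (B := fun A : nat -> Prop => exists k, forall n, (k < n)%nat -> A n).
  assert (Hfip : finite_intersection_property B).
  { intros l Hl.
    assert (Hk : exists k, forall n, (k < n)%nat -> Forall (fun A => A n) l).
    { induction Hl as [|A l [k1 H1] Hl [k2 H2]]; [exists 0%nat; intros; constructor|].
      exists (Nat.max k1 k2). intros n Hn. constructor; [apply H1|apply H2]; lia. }
    destruct Hk as [k Hk]. exists (k + 1)%nat. apply Hk. lia. }
  destruct (UltrafilterExistence.ultrafilter_extends nat B Hfip) as [U [HU HBU]].
  exists U. split; auto. intros k. apply HBU. exists k; auto.
Qed.

Lemma ulim_char_tail_bound U (p : nat -> S) g c r k :
  is_ultrafilter U -> (forall k, U (fun n => (k < n)%nat)) -> bounded_C S g ->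
  (forall n, (k < n)%nat -> Cnorm (Csub c (g (p n))) < r) ->
  Cnorm (Csub (ulim_char U p g) c) <= r.
Proof.
  intros HU Htail Hg Hb. apply ulim_char_bound; auto.
  apply (UF_mono nat U HU _ _ (Htail k)). intros n Hn.
  rewrite Cnorm_opp_sub. apply Rlt_le, Hb; auto.
Qed.

Definition diagonal_step (mu nu : (S -> C) -> C) f d (h : list (S * S)) (pq : S * S) : Prop :=
  Cnorm (Csub (mu (Tmu S op nu f)) (Tmu S op nu f (fst pq))) < d /\
  Cnorm (Csub (nu (Tmu S op mu f)) (Tmu S op mu f (snd pq))) < d /\
  forall pr, In pr h ->
    Cnorm (Csub (mu (Ls S op (snd pr) f)) (f (op (snd pr) (fst pq)))) < d /\
    Cnorm (Csub (nu (Ls S op (fst pr) f)) (f (op (fst pr) (snd pq)))) < d.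

Lemma diagonal_step_exists mu nu f d h : SL mu -> SL nu -> Lmcf f -> 0 < d ->
  exists pq, diagonal_step mu nu f d h pq.
Proof.
  intros Hmu Hnu Hf Hd.
  assert (Htr : forall (sel : S * S -> S), Forall Lmcf (map (fun pr => Ls S op (sel pr) f) h)).
  { intros sel. rewrite Forall_forall. intros g Hg. apply in_map_iff in Hg.
    destruct Hg as [pr [<- _]]. apply Lmc_Ls; auto. }
  destruct (density mu (Tmu S op nu f :: map (fun pr => Ls S op (snd pr) f) h) d Hmu)
    as [p Hp]; auto using Tmu_SLmc_Lmc.
  destruct (density nu (Tmu S op mu f :: map (fun pr => Ls S op (fst pr) f) h) d Hnu)
    as [q Hq]; auto using Tmu_SLmc_Lmc.
  exists (p, q). inversion Hp as [|? ? Hp1 Hp2]; subst. inversion Hq as [|? ? Hq1 Hq2]; subst.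
  rewrite Forall_map, Forall_forall in Hp2, Hq2.
  split; [exact Hp1|split; [exact Hq1|]]. intros pr Hin. split; [apply Hp2|apply Hq2]; auto.
Qed.

Lemma diagonal_sequences mu nu f d : SL mu -> SL nu -> Lmcf f -> 0 < d ->
  exists x y : nat -> S,
    (forall k n, (k < n)%nat -> Cnorm (Csub (mu (Tmu S op nu f)) (f (op (x k) (y n)))) < 2 * d) /\
    (forall k n, (k < n)%nat -> Cnorm (Csub (nu (Tmu S op mu f)) (f (op (y k) (x n)))) < 2 * d).
Proof.
  intros Hmu Hnu Hf Hd.
  destruct (choice (diagonal_step mu nu f d)) as [G HG].
  { intros h. apply diagonal_step_exists; auto. }
  exists (fun n => fst (G (history G n))), (fun n => snd (G (history G n))).
  split; intros k n Hkn;
    destruct (HG (history G k)) as [Tx [Ty _]]; destruct (HG (history G n)) as [_ [_ Hh]];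
    destruct (Hh _ (history_contains G k n Hkn)) as [Hyx Hxy];
    set (p := G (history G k)) in *; set (q := G (history G n)) in *.
  - pose proof (Cnorm_tri (mu (Tmu S op nu f)) (Tmu S op nu f (fst p)) (f (op (fst p) (snd q)))).
    change (Tmu S op nu f (fst p)) with (nu (Ls S op (fst p) f)) in *. lra.
  - pose proof (Cnorm_tri (nu (Tmu S op mu f)) (Tmu S op mu f (snd p)) (f (op (snd p) (fst q)))).
    change (Tmu S op mu f (snd p)) with (mu (Ls S op (snd p) f)) in *. lra.
Qed.

Lemma diagonal_closures_disjoint (x y : nat -> S) f a b d : Lmcf f -> 6 * d <= Cnorm (Csub a b) ->
  (forall k n, (k < n)%nat -> Cnorm (Csub a (f (op (x k) (y n)))) < 2 * d) ->
  (forall k n, (k < n)%nat -> Cnorm (Csub b (f (op (y k) (x n)))) < 2 * d) ->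
  ~ (exists mu, SL mu /\
       clE (fun s => exists k n, (k < n)%nat /\ s = op (x k) (y n)) mu /\
       clE (fun s => exists k n, (k < n)%nat /\ s = op (y k) (x n)) mu).
Proof.
  intros Hf Hab Bx By [rho [_ [H1 H2]]].
  assert (Hd : 0 < d).
  { destruct (H1 nil (Forall_nil _) 1 Rlt_0_1) as [s [[k [n [Hkn _]]] _]].
    specialize (Bx k n Hkn). pose proof (Cnorm_ge0 (Csub a (f (op (x k) (y n))))). lra. }
  destruct (H1 (f :: nil) ltac:(constructor; auto) d Hd) as [s1 [[k1 [n1 [Hk1 ->]]] F1]].
  destruct (H2 (f :: nil) ltac:(constructor; auto) d Hd) as [s2 [[k2 [n2 [Hk2 ->]]] F2]].
  inversion F1 as [|? ? G1 _]. inversion F2 as [|? ? G2 _]. unfold eps_map in G1, G2.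
  specialize (Bx k1 n1 Hk1). specialize (By k2 n2 Hk2).
  pose proof (Cnorm_tri a (f (op (x k1) (y n1))) (rho f)).
  pose proof (Cnorm_tri a (rho f) (f (op (y k2) (x n2)))).
  pose proof (Cnorm_tri a (f (op (y k2) (x n2))) b).
  rewrite (Cnorm_opp_sub (f (op (x k1) (y n1)))) in *.
  rewrite (Cnorm_opp_sub (f (op (y k2) (x n2))) b) in *. lra.
Qed.

(** If chi = eps(s), evaluate chi on T_chi' f, chi' the limit of y: along x
    this is close to a, while it equals chi' (L_s f), the limit of
    f (s y_n) = f (y_n s) = chi (L_(y_n) f), which is close to b. *)
Lemma diagonal_limit_not_principal (Hcomm : commutative S op) U (x y : nat -> S) f a b d :
  is_ultrafilter U -> (forall k, U (fun n => (k < n)%nat)) -> Lmcf f -> 4 * d < Cnorm (Csub a b) ->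
  (forall k n, (k < n)%nat -> Cnorm (Csub a (f (op (x k) (y n)))) < 2 * d) ->
  (forall k n, (k < n)%nat -> Cnorm (Csub b (f (op (y k) (x n)))) < 2 * d) ->
  in_Sstar S op open (ulim_char U x).
Proof.
  intros HU Htail Hf Hab Bx By.
  set (chi := ulim_char U x); set (chi' := ulim_char U y).
  assert (Hchi' : SL chi') by (apply chCB_SL, ulim_char_chCB; auto).
  split; [apply chCB_SL, ulim_char_chCB; auto|]. intros [s Hs].
  assert (Near_a : forall k, Cnorm (Csub (chi' (Ls S op (x k) f)) a) <= 2 * d)
    by (intros k; apply (ulim_char_tail_bound U y _ _ _ k); auto using Lmc_bounded, Lmc_Ls;
        intros n Hn; apply Bx; auto).
  assert (Near_b : forall k, Cnorm (Csub (chi (Ls S op (y k) f)) b) <= 2 * d)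
    by (intros k; apply (ulim_char_tail_bound U x _ _ _ k); auto using Lmc_bounded, Lmc_Ls;
        intros n Hn; apply By; auto).
  assert (HT : Lmcf (Tmu S op chi' f)) by (apply Tmu_SLmc_Lmc; auto).
  assert (A1 : Cnorm (Csub (chi (Tmu S op chi' f)) a) <= 2 * d)
    by (apply ulim_char_bound; auto using Lmc_bounded; apply (UF_all nat U HU); intros k; apply Near_a).
  assert (A2 : chi (Tmu S op chi' f) = chi' (Ls S op s f)) by (rewrite (Hs _ HT); reflexivity).
  assert (A3 : Cnorm (Csub (chi' (Ls S op s f)) b) <= 2 * d).
  { apply ulim_char_bound; auto using Lmc_bounded, Lmc_Ls.
    apply (UF_all nat U HU). intros n.
    change (Ls S op s f (y n)) with (f (op s (y n))). rewrite Hcomm.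
    change (f (op (y n) s)) with (eps_map S s (Ls S op (y n) f)).
    rewrite <- (Hs (Ls S op (y n) f)) by (apply Lmc_Ls; auto). apply Near_b. }
  rewrite A2 in A1. pose proof (Cnorm_tri a (chi' (Ls S op s f)) b).
  rewrite (Cnorm_opp_sub a (chi' (Ls S op s f))) in H. lra.
Qed.

Lemma noncommutative_witness : ~ SLmc_commutative S op open ->
  exists mu nu f, SL mu /\ SL nu /\ Lmcf f /\ mu (Tmu S op nu f) <> nu (Tmu S op mu f).
Proof.
  intros Hnc. apply NNPP; intro H. apply Hnc. intros mu nu Hmu Hnu f Hf.
  apply NNPP; intro Hn. apply H; exists mu, nu, f; auto.
Qed.

Lemma noncommutative_separated_sequences (Hcomm : commutative S op) :
  ~ SLmc_commutative S op open ->
  exists x y : nat -> S,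
    unbounded_seq S op open x /\ unbounded_seq S op open y /\
    ~ (exists mu, SL mu /\
         clE (fun s => exists k n, (k < n)%nat /\ s = op (x k) (y n)) mu /\
         clE (fun s => exists k n, (k < n)%nat /\ s = op (y k) (x n)) mu).
Proof.
  intros Hnc.
  destruct (noncommutative_witness Hnc) as [mu [nu [f [Hmu [Hnu [Hf Hab]]]]]].
  set (a := mu (Tmu S op nu f)) in *; set (b := nu (Tmu S op mu f)) in *.
  set (d := Cnorm (Csub a b) / 8).
  assert (Hpos : 0 < Cnorm (Csub a b)) by (apply Csub_neq_pos; auto).
  destruct (diagonal_sequences mu nu f d Hmu Hnu Hf ltac:(unfold d; lra)) as [x [y [Bx By]]].
  destruct tail_ultrafilter as [U [HU Htail]].
  exists x, y. split; [|split].
  - exists (ulim_char U x). split; [|apply ulim_char_cl; auto].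
    apply (diagonal_limit_not_principal Hcomm U x y f a b d); auto. unfold d; lra.
  - exists (ulim_char U y). split; [|apply ulim_char_cl; auto].
    apply (diagonal_limit_not_principal Hcomm U y x f b a d); auto.
    rewrite Cnorm_opp_sub. unfold d; lra.
  - apply (diagonal_closures_disjoint x y f a b d); auto. unfold d; lra.
Qed.

End Semigroup.

Theorem theorem4p5 (S : Type) (op : S -> S -> S) (open : (S -> Prop) -> Prop)
  (HS : hausdorff_semitopological_semigroup S op open)
  (Hcomm : commutative S op) :
  ~ SLmc_commutative S op open <->
  exists x y : nat -> S,
    unbounded_seq S op open x /\ unbounded_seq S op open y /\
    ~ (exists mu, SLmc S op open mu /\
         in_cl_eps S op open (fun s => exists k n, (k < n)%nat /\ s = op (x k) (y n)) mu /\
         in_cl_eps S op open (fun s => exists k n, (k < n)%nat /\ s = op (y k) (x n)) mu).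
Proof.
  destruct HS as [Htop [_ [Hassoc [Hlc _]]]].
  split.
  - apply noncommutative_separated_sequences; auto.
  - intros [x [y [Hx [Hy Hdisj]]]] Hc. apply Hdisj.
    apply commutative_closures_meet; auto.
Qed.
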